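(* Let $(a_k)_{k\in\mathbb{Z}}$ be real numbers, all but finitely many zero, $N\ge1$, and let $c:\mathbb{Z}^N\to\mathbb{R}$ be square-summable and $\widetilde S_N$-invariant. Then there exists a sequence $(c_n)_{n\ge1}$ of real-valued, finitely supported, $\widetilde S_N$-invariant functions on $\mathbb{Z}^N$ such that $T_{D_0}c_n\to T_{D_0}c$ in $L^2(\mathbb{Z}^N)$ as $n\to\infty$.
   Context: $\widetilde S_N$ is the group of transformations of $\mathbb{Z}^N$ generated by the coordinate transpositions $\sigma_{i,j}$ ($1\le i,j\le N$) and $\gamma_1(z_1,\dots,z_N)=(-z_1,z_2-z_1,\dots,z_N-z_1)$. For $c:\mathbb{Z}^N\to\mathbb{R}$, the operator $T_{D_0}$ associated with $D_0=\sum_ka_k\partial_k$ is $(T_{D_0}c)(z)=\sum_{k\in\mathbb{Z}}a_k\,c(z-ke)$, where $e=(1,\dots,1)\in\mathbb{Z}^N$. *)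

From HB Require Import structures.
From mathcomp Require Import all_boot all_order all_algebra.
From mathcomp Require Import all_classical all_reals all_analysis.
Set Implicit Arguments. Unset Strict Implicit. Unset Printing Implicit Defensive.
Import Order.TTheory GRing.Theory Num.Theory.
Local Open Scope ring_scope.

Definition pt (N : nat) := {ffun 'I_N -> int}.

Definition sigma (N : nat) (i j : 'I_N) (z : pt N) : pt N :=
  [ffun k => z (if k == i then j else if k == j then i else k)].

(* gamma_1 (z_1,...,z_N) = (-z_1, z_2 - z_1, ..., z_N - z_1);
   i0 is the first coordinate *)
Definition gamma1 (N : nat) (i0 : 'I_N) (z : pt N) : pt N :=
  [ffun k => if k == i0 then - z i0 else z k - z i0].

(* the group \tilde S_N: generated (under composition) by the sigma_{i,j} and
   gamma_1; all generators are involutions, so closure under composition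
   starting from the identity yields the whole generated group. *)
Inductive inSN (N : nat) (i0 : 'I_N) : (pt N -> pt N) -> Prop :=
| inSN_id : inSN i0 id
| inSN_sigma (i j : 'I_N) g : inSN i0 g -> inSN i0 (sigma i j \o g)
| inSN_gamma g : inSN i0 g -> inSN i0 (gamma1 i0 \o g).

Definition SN_invariant (R : realType) (N : nat) (i0 : 'I_N) (c : pt N -> R) :=
  forall g, inSN i0 g -> forall z, c (g z) = c z.

Definition shift (N : nat) (z : pt N) (k : int) : pt N := [ffun i => z i - k].

(* T_{D_0} c (z) = sum_k a_k c(z - k e), where s lists (without repetition)
   a set of indices outside of which a vanishes *)
Definition TD0 (R : realType) (N : nat) (a : int -> R) (s : seq int)
  (c : pt N -> R) (z : pt N) : R :=
  \sum_(k <- s) a k * c (shift z k).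

Definition sq_summable (R : realType) (N : nat) (c : pt N -> R) :=
  (\esum_(z in [set: pt N]) ((c z ^+ 2)%:E) < +oo)%E.

Definition fin_supp (R : realType) (N : nat) (c : pt N -> R) :=
  exists S : seq (pt N), forall z, z \notin S -> c z = 0.

(* Truncate c to the sets Q_n = {z | |z_i| <= n, |z_i - z_j| <= n}.  Each Q_n
   is finite, and it is S~_N-invariant because sigma_{i,j} and gamma_1 only
   permute, up to sign, the numbers z_i and z_i - z_j.  By Cauchy-Schwarz and
   the translation invariance of the l^2 norm,
   ||T_{D_0} f||^2 <= |s| (sum_k a_k^2) ||f||^2, so ||T_{D_0} c_n - T_{D_0} c||^2
   is controlled by ||c_n - c||^2, the tail of the convergent sum of c(z)^2
   outside Q_n, which tends to 0 since the Q_n exhaust Z^N. *)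

From Pilot Require Import Defs.
From HB Require Import structures.
From mathcomp Require Import all_boot all_order all_algebra.
From mathcomp Require Import all_classical all_reals all_analysis.
From mathcomp Require Import ring lra zify.
Set Implicit Arguments. Unset Strict Implicit. Unset Printing Implicit Defensive.
Import Order.TTheory GRing.Theory Num.Theory.
Local Open Scope classical_set_scope.
Local Open Scope ring_scope.

Section EsumFiniteSums.
Variables (R : realType) (T : choiceType).
Implicit Types (f : T -> R) (r : seq T).

Lemma esum_le_sums f (M : R) :
  (forall r, uniq r -> \sum_(x <- r) f x <= M) ->
  (\esum_(x in [set: T]) (f x)%:E <= M%:E)%E.
Proof.
move=> le_M; apply: ge_ereal_sup => _ [A [finA _] <-].
by rewrite fsbig_finite // sumEFin lee_fin le_M // finmap.fset_uniq.
Qed.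

Lemma sum_le_esum f r : uniq r ->
  ((\sum_(x <- r) f x)%:E <= \esum_(x in [set: T]) (f x)%:E)%E.
Proof.
move=> ur; apply: esum_ge; exists [set` r]; first by split; [exact: finite_seq|].
by rewrite -fsbig_seq // sumEFin.
Qed.

Lemma esum_tail_le f (e : R) : (forall x, 0 <= f x) ->
  (\esum_(x in [set: T]) (f x)%:E < +oo)%E -> 0 < e ->
  exists F : seq T, forall r, uniq r -> {in r, forall x, x \notin F} ->
    \sum_(x <- r) f x <= e.
Proof.
move=> f_ge0 f_fin e_gt0.
set S := \esum_(x in [set: T]) (f x)%:E.
have S_fin : S \is a fin_num.
  by rewrite ge0_fin_numE // esum_ge0 // => x _; rewrite lee_fin.
have [_ [A [finA _] <-] close] := ub_ereal_sup_adherent e_gt0 S_fin.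
set F := finmap.enum_fset (fset_set A).
exists F => r ur r_out.
have urF : uniq (r ++ F).
  rewrite cat_uniq ur finmap.fset_uniq andbT /=.
  by apply/hasPn => x xF; apply/negP => /r_out; rewrite xF.
have {close} : (S - e%:E < (\sum_(x <- F) f x)%:E)%E.
  by move: close; rewrite fsbig_finite // sumEFin.
have := sum_le_esum f urF; rewrite big_cat /= -/S.
by rewrite -(fineK S_fin) -EFinD !lte_fin !lee_fin; lra.
Qed.

End EsumFiniteSums.

Section BoundedPoints.
Variable N : nat.
Implicit Types (n : nat) (z : pt N) (i j : 'I_N).

Definition bounded_by n z : bool :=
  [forall i, `|z i| <= n%:Z] && [forall i, forall j, `|z i - z j| <= n%:Z].

Lemma bounded_byP n z :
  reflect ((forall i, `|z i| <= n%:Z) /\ (forall i j, `|z i - z j| <= n%:Z))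
          (bounded_by n z).
Proof.
apply: (iffP andP) => [[/forallP b1 /forallP b2]|[b1 b2]]; split => //.
- by move=> i j; have /forallP := b2 i; apply.
- exact/forallP.
- by apply/forallP => i; apply/forallP.
Qed.

Lemma sigmaK i j : involutive (sigma i j).
Proof.
move=> z; apply/ffunP => k; rewrite !ffunE; congr (z _).
case: (eqVneq k i) => [->|ki]; first by case: eqVneq => [->|_]; rewrite ?eqxx.
by case: (eqVneq k j) => [->|kj]; rewrite ?eqxx // (negPf ki) (negPf kj).
Qed.

Lemma gamma1K (i0 : 'I_N) : involutive (gamma1 i0).
Proof.
move=> z; apply/ffunP => k; rewrite !ffunE eqxx.
by case: eqVneq => [->|_]; rewrite opprK ?subrK.
Qed.

Lemma bounded_by_sigma n i j z : bounded_by n (sigma i j z) = bounded_by n z.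
Proof.
suff bd_sigma z' : bounded_by n z' -> bounded_by n (sigma i j z').
  by apply/idP/idP => [/bd_sigma|/bd_sigma //]; rewrite sigmaK.
by move=> /bounded_byP[b1 b2]; apply/bounded_byP; split=> *; rewrite !ffunE.
Qed.

Lemma bounded_by_gamma1 n (i0 : 'I_N) z :
  bounded_by n (gamma1 i0 z) = bounded_by n z.
Proof.
suff bd_gamma z' : bounded_by n z' -> bounded_by n (gamma1 i0 z').
  by apply/idP/idP => [/bd_gamma|/bd_gamma //]; rewrite gamma1K.
move=> /bounded_byP[b1 b2]; apply/bounded_byP; split=> [k|k l]; rewrite !ffunE.
  by case: ifP; rewrite ?normrN.
have := b1 k; have := b1 l; have := b2 k l; do 2 case: ifP => _; lia.
Qed.

Lemma bounded_by_SN n (i0 : 'I_N) g z :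
  inSN i0 g -> bounded_by n (g z) = bounded_by n z.
Proof.
by elim=> [//|i j {}g _ IH|{}g _ IH] /=; rewrite ?bounded_by_sigma ?bounded_by_gamma1.
Qed.

Lemma bounded_by_mono n m z : (n <= m)%N -> bounded_by n z -> bounded_by m z.
Proof.
move=> le_nm /bounded_byP[b1 b2]; apply/bounded_byP.
by split=> [k|k l]; [have := b1 k|have := b2 k l]; lia.
Qed.

Lemma bounded_by_max z : bounded_by (2 * \max_i `|z i|%N) z.
Proof.
have le_max k := @leq_bigmax _ (fun i => `|z i|%N) k.
apply/bounded_byP; split=> [k|k l]; first by have := le_max k; lia.
by have := le_max k; have := le_max l; lia.
Qed.

Lemma bounded_by_eventually (r : seq (pt N)) :
  exists n0, forall n, (n0 <= n)%N -> {in r, forall z, bounded_by n z}.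
Proof.
exists (\max_(z <- r) (2 * \max_i `|z i|%N)) => n le_n z zr.
apply: bounded_by_mono (bounded_by_max z); apply: leq_trans le_n.
by rewrite (big_rem z zr) leq_maxl.
Qed.

Lemma bounded_by_finite n : exists S : seq (pt N), forall z, bounded_by n z -> z \in S.
Proof.
exists [seq [ffun i => (f i : nat)%:Z - n%:Z] | f : {ffun 'I_N -> 'I_(n + n).+1}].
move=> z /bounded_byP[b1 _]; apply/mapP.
exists [ffun i => inord (absz (z i + n%:Z))]; first by rewrite mem_enum.
apply/ffunP => i; have bi := b1 i; rewrite !ffunE inordK; last by lia.
by rewrite abszE ger0_norm ?addrK //; lia.
Qed.

Lemma shift_inj (k : int) : injective (fun z : pt N => Defs.shift z k).
Proof.
by move=> z1 z2 /ffunP eq_z; apply/ffunP => i; have := eq_z i; rewrite !ffunE => /addIr.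
Qed.

End BoundedPoints.

Lemma sqr_sum_le (R : realFieldType) (I : Type) (r : seq I) (y : I -> R) :
  (\sum_(i <- r) y i) ^+ 2 <= (size r)%:R * \sum_(i <- r) y i ^+ 2.
Proof.
have sum_const (x : R) : \sum_(j <- r) x = x *+ size r.
  by rewrite big_const_seq count_predT iter_addr_0.
have double_sum : \sum_(i <- r) \sum_(j <- r) (y i ^+ 2 + y j ^+ 2) =
                  2 * ((size r)%:R * \sum_(i <- r) y i ^+ 2).
  rewrite (eq_bigr (fun i => y i ^+ 2 *+ size r + \sum_(j <- r) y j ^+ 2)); last first.
    by move=> i _; rewrite big_split /= sum_const.
  by rewrite big_split /= sum_const sumrMnl mulr_natl mulr2n mulr_natl.
have cross_le :
    2 * (\sum_(i <- r) y i) ^+ 2 <= \sum_(i <- r) \sum_(j <- r) (y i ^+ 2 + y j ^+ 2).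
  rewrite expr2 mulr_suml mulr_sumr; apply: ler_sum => i _.
  rewrite mulr_sumr mulr_sumr; apply: ler_sum => j _.
  by have := sqr_ge0 (y i - y j); rewrite sqrrB; lra.
by move: cross_le; rewrite double_sum; lra.
Qed.

Section DifferenceOperator.
Variables (R : realType) (a : int -> R) (s : seq int) (N : nat).
Implicit Types (f g : pt N -> R).

Lemma TD0B f g z : TD0 a s f z - TD0 a s g z = TD0 a s (f \- g) z.
Proof. by rewrite /TD0 -sumrB; apply: eq_bigr => k _; rewrite mulrBr. Qed.

Lemma sum_shift_le_esum f k (r : seq (pt N)) : uniq r ->
  ((\sum_(z <- r) f (Defs.shift z k))%:E <= \esum_(z in [set: pt N]) (f z)%:E)%E.
Proof.
move=> ur; rewrite -(big_map (fun z => Defs.shift z k) xpredT); apply: sum_le_esum.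
by rewrite map_inj_uniq //; exact: shift_inj.
Qed.

Definition TD0_bound : R := (size s)%:R * \sum_(k <- s) a k ^+ 2.

Lemma TD0_bound_ge0 : 0 <= TD0_bound.
Proof. by rewrite mulr_ge0 // sumr_ge0 // => k _; rewrite sqr_ge0. Qed.

Lemma esum_sqr_TD0_le f (M : R) :
  (\esum_(z in [set: pt N]) (f z ^+ 2)%:E <= M%:E)%E ->
  (\esum_(z in [set: pt N]) (TD0 a s f z ^+ 2)%:E <= (TD0_bound * M)%:E)%E.
Proof.
move=> f_le_M; apply: esum_le_sums => r ur.
apply: (@le_trans _ _
  (\sum_(z <- r) (size s)%:R * \sum_(k <- s) a k ^+ 2 * f (Defs.shift z k) ^+ 2)).
  by apply: ler_sum => z _; under eq_bigr do rewrite -exprMn; exact: sqr_sum_le.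
rewrite /TD0_bound -mulrA mulr_suml -mulr_sumr ler_wpM2l // exchange_big /=.
apply: ler_sum => k _; rewrite -mulr_sumr ler_wpM2l ?sqr_ge0 // -lee_fin.
exact: le_trans (sum_shift_le_esum (fun w => f w ^+ 2) k ur) f_le_M.
Qed.

End DifferenceOperator.

Section Truncation.
Variables (R : realType) (N : nat).
Implicit Types (c : pt N -> R).

Definition trunc n c z : R := if bounded_by n z then c z else 0.

Lemma trunc_fin_supp n c : fin_supp (trunc n c).
Proof.
have [S bdS] := bounded_by_finite N n.
by exists S => z zS; rewrite /trunc; case: ifP => // /bdS; rewrite (negPf zS).
Qed.

Lemma trunc_SN_invariant n (i0 : 'I_N) c :
  SN_invariant i0 c -> SN_invariant i0 (trunc n c).
Proof. by move=> c_inv g g_SN z; rewrite /trunc (bounded_by_SN n z g_SN) c_inv. Qed.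

Lemma esum_sqr_trunc_tail c (e : R) : sq_summable c -> 0 < e ->
  exists n0, forall n, (n0 <= n)%N ->
    (\esum_(z in [set: pt N]) ((trunc n c \- c) z ^+ 2)%:E <= e%:E)%E.
Proof.
move=> c_fin e_gt0.
have [F F_tail] := esum_tail_le (fun z => sqr_ge0 (c z)) c_fin e_gt0.
have [n0 F_bd] := bounded_by_eventually F.
exists n0 => n le_n; apply: esum_le_sums => r ur.
rewrite (bigID (bounded_by n)) /= big1 ?add0r => [|z bd_z]; last first.
  by rewrite /trunc bd_z subrr expr0n.
rewrite (eq_bigr (fun z => c z ^+ 2)) => [|z /negPf nbd]; last first.
  by rewrite /trunc nbd sub0r sqrrN.
rewrite -big_filter; apply: F_tail; first exact: filter_uniq.
by move=> z; rewrite mem_filter => /andP[nbd _]; apply: contraNN nbd; exact: F_bd.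
Qed.

End Truncation.

Lemma ge0_cvge0 (R : realType) (u : nat -> \bar R) : (forall n, 0 <= u n)%E ->
  (forall e : R, 0 < e -> exists n0, forall n, (n0 <= n)%N -> (u n <= e%:E)%E) ->
  u @ \oo --> 0%E.
Proof.
move=> u_ge0 u_small.
have u_fin n e : 0 < e -> (u n <= e%:E)%E -> u n \is a fin_num.
  by move=> e_gt0 le_e; rewrite ge0_fin_numE // (le_lt_trans le_e) // ltry.
apply/fine_cvgP; split.
  have [n0 le1] := u_small 1 ltr01.
  by exists n0 => // n /= le_n; exact: u_fin (le1 _ le_n).
apply/cvgrPdist_le => e e_gt0; have [n0 le_e] := u_small e e_gt0.
exists n0 => // n /= le_n; have fin_n := u_fin n e e_gt0 (le_e n le_n).
by rewrite sub0r normrN ger0_norm ?fine_ge0 // -lee_fin fineK // le_e.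
Qed.

Theorem lemma5p1 (R : realType) (a : int -> R) (s : seq int)
  (hs : uniq s) (ha : forall k, k \notin s -> a k = 0)
  (N : nat) (hN : (0 < N)%N) (c : pt N -> R)
  (hc2 : sq_summable c) (hcinv : SN_invariant (Ordinal hN) c) :
  exists cn : nat -> pt N -> R,
    (forall n, fin_supp (cn n) /\ SN_invariant (Ordinal hN) (cn n)) /\
    ((fun n => \esum_(z in [set: pt N])
                 (((TD0 a s (cn n) z - TD0 a s c z) ^+ 2)%:E))
       @ \oo --> 0%E).
Proof.
exists (fun n => trunc n c); split.
  by move=> n; split; [exact: trunc_fin_supp | exact: trunc_SN_invariant].
apply: ge0_cvge0 => [n|e e_gt0].
  by apply: esum_ge0 => z _; rewrite lee_fin sqr_ge0.
have C_ge0 := TD0_bound_ge0 a s.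
have eps_gt0 : 0 < e / (TD0_bound a s + 1) by rewrite divr_gt0 // ltr_wpDl.
have [n0 tail] := esum_sqr_trunc_tail hc2 eps_gt0.
exists n0 => n /tail /(esum_sqr_TD0_le a s) le_Ceps.
under eq_esum do rewrite TD0B.
apply: le_trans le_Ceps _.
by rewrite lee_fin mulrA ler_pdivrMr ?ltr_wpDl //; nra.
Qed.
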